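(* Let $G$ be a graph with a min-max clique covering $\{C_1,\dots,C_\ell\}$ that has simple intersection, let $\mathcal{C}(G)$ be the compressed cliques graph constructed from it, and let $\phi:V(G)\to V(\mathcal{C}(G))$ be given by $\phi(v)=v_{i,j}$ if $v\in C_i\cap C_j$ ($i\ne j$) and $\phi(v)=v_{i,i}$ if $v$ lies in $C_i$ and in no other clique of the covering. If $C$ is a clique in $\mathcal{C}(G)$, then $\phi^{-1}(C)$ is a clique in $G$.
   Context: A clique covering of a graph is a set of cliques such that every edge lies in at least one of them; $\operatorname{cc}(G)$ is its minimum size. A min-max clique covering is a clique covering of size $\operatorname{cc}(G)$ consisting of maximal cliques; it has simple intersection if no three distinct cliques of it share a vertex. Put $C_{i,j}=C_i\cap C_j$ ($i\ne j$) and $C_{i,i}=C_i\setminus\bigcup_{j\ne i}C_j$; the compressed cliques graph $\mathcal{C}(G)$ has a vertex $v_{i,j}$ for each non-empty $C_{i,j}$ (including $i=j$), with $v_{i,j}\sim v_{i',j'}$ iff $\{i,j\}\cap\{i',j'\}\ne\emptyset$. *)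

From mathcomp Require Import all_boot.
Set Implicit Arguments. Unset Strict Implicit. Unset Printing Implicit Defensive.

Section Graphs.
Variables (T : finType) (e : rel T).

Definition simple_graph : Prop := symmetric e /\ irreflexive e.

Definition is_clique (K : {set T}) : Prop :=
  forall x y, x \in K -> y \in K -> x != y -> e x y.

Definition is_maximal_clique (K : {set T}) : Prop :=
  is_clique K /\ forall K' : {set T}, is_clique K' -> K \subset K' -> K' = K.

Definition is_clique_covering (l : nat) (C : 'I_l -> {set T}) : Prop :=
  (forall i, is_clique (C i)) /\
  (forall x y, e x y -> exists i, (x \in C i) && (y \in C i)).

Definition is_cc (l : nat) : Prop :=
  (exists C : 'I_l -> {set T}, injective C /\ is_clique_covering C) /\
  (forall (l' : nat) (C' : 'I_l' -> {set T}), is_clique_covering C' -> l <= l').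

Definition min_max_clique_covering (l : nat) (C : 'I_l -> {set T}) : Prop :=
  injective C /\ is_clique_covering C /\ (forall i, is_maximal_clique (C i)) /\ is_cc l.

Definition simple_intersection (l : nat) (C : 'I_l -> {set T}) : Prop :=
  forall i j k v, i != j -> j != k -> i != k ->
    v \in C i -> v \in C j -> v \in C k -> False.

End Graphs.

Section Compressed.
Variables (T : finType) (l : nat) (C : 'I_l -> {set T}).

(* The vertex v_{i,j} of the compressed cliques graph is encoded by the
   unordered index set A = {i,j} (so v_{i,i} is encoded by {i}). *)
Definition is_index_pair (A : {set 'I_l}) : bool :=
  [exists i, exists j, A == [set i; j]].

(* C_{i,j} = C_i \cap C_j (i != j),  C_{i,i} = C_i \ U_{j != i} C_j. *)
Definition Cpart (A : {set 'I_l}) : {set T} :=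
  if #|A| == 1 then
    \bigcup_(i in A) (C i :\: \bigcup_(j | j \notin A) C j)
  else \bigcap_(i in A) C i.

Definition CV : {set {set 'I_l}} :=
  [set A | is_index_pair A && (Cpart A != set0)].

Definition cadj (A A' : {set 'I_l}) : bool :=
  [&& A \in CV, A' \in CV, A != A' & ~~ [disjoint A & A']].

Definition is_cclique (K : {set {set 'I_l}}) : Prop :=
  K \subset CV /\ forall A A', A \in K -> A' \in K -> A != A' -> cadj A A'.

(* phi(v) = v_{i,j} if v \in C_{i,j}; None if v lies in no clique of the covering. *)
Definition phi (v : T) : option {set 'I_l} :=
  [pick A | (A \in CV) && (v \in Cpart A)].

Definition phi_preim (K : {set {set 'I_l}}) : {set T} :=
  [set v | if phi v is Some A then A \in K else false].

End Compressed.

From mathcomp Require Import all_boot.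
Set Implicit Arguments. Unset Strict Implicit. Unset Printing Implicit Defensive.

(* Two vertices of phi^-1(K) lie in parts C_A and C_B whose index sets A and B
   share some index k (as A = B or A ~ B in the compressed cliques graph), so
   both lie in the clique C_k. *)

Section PhiPreimage.
Variables (T : finType) (l : nat) (C : 'I_l -> {set T}).

Lemma Cpart_subset (A : {set 'I_l}) (k : 'I_l) : k \in A -> Cpart C A \subset C k.
Proof.
rewrite /Cpart; case: ifP => [/cards1P [i ->] | _] kA; apply/subsetP => v.
  case/bigcupP=> j; rewrite inE in kA; rewrite inE => /eqP -> /setDP [+ _].
  by rewrite (eqP kA).
by move/bigcapP; apply.
Qed.

Lemma CV_neq0 (A : {set 'I_l}) : A \in CV C -> A != set0.
Proof.
rewrite inE => /andP [/existsP [i /existsP [j /eqP ->]] _].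
by apply/set0Pn; exists i; rewrite !inE eqxx.
Qed.

Lemma cclique_meet (K : {set {set 'I_l}}) (A B : {set 'I_l}) :
  is_cclique C K -> A \in K -> B \in K -> ~~ [disjoint A & B].
Proof.
move=> [KCV Kadj] AK BK; have [<- | AB] := eqVneq A B.
  by rewrite -setI_eq0 setIid CV_neq0 // (subsetP KCV).
by case/and4P: (Kadj A B AK BK AB).
Qed.

Lemma phi_preimP (K : {set {set 'I_l}}) (v : T) :
  v \in phi_preim C K -> exists2 A, A \in K & v \in Cpart C A.
Proof. by rewrite inE /phi; case: pickP => // A /andP [_ vA] AK; exists A. Qed.

Lemma phi_preim_clique (e : rel T) (K : {set {set 'I_l}}) :
  (forall i, is_clique e (C i)) -> is_cclique C K -> is_clique e (phi_preim C K).
Proof.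
move=> Ccl Kcl x y /phi_preimP [A AK xA] /phi_preimP [B BK yB].
have /pred0Pn [k /andP [kA kB]] := cclique_meet Kcl AK BK.
by apply: Ccl; [apply: (subsetP (Cpart_subset kA)) | apply: (subsetP (Cpart_subset kB))].
Qed.

End PhiPreimage.

Theorem mainTheorem20 (T : finType) (e : rel T) (l : nat) (C : 'I_l -> {set T})
    (K : {set {set 'I_l}}) :
  simple_graph e ->
  min_max_clique_covering e C ->
  simple_intersection C ->
  is_cclique C K ->
  is_clique e (phi_preim C K).
Proof.
move=> _ [_ [[Ccl _] _]] _.
exact: phi_preim_clique.
Qed.
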